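(* Let $\omega=SSw$ be an attack cycle starting with two letters S, where $w=w_1\cdots w_\nu$ with $w_\nu=H$, and let $X_0=0$, $X_i=X_{i-1}+1$ if $w_i=S$ and $X_i=X_{i-1}-1$ if $w_i=H$. Define $$D(\omega)=\sum_{i}\,(X_i+3),$$ the sum being over all indices $1\le i\le\nu$ with $X_i<n_1-2$ and $X_i<X_{i-1}$. Then $$\mathbb{E}[D(\omega)\mid\omega=SS\ldots]=\frac{p}{(p-q)^2}\Bigl(2p-q-\bigl(p+n_1(p-q)\bigr)\Bigl(\frac qp\Bigr)^{n_1-1}\Bigr).$$
   Context: Honest hashrate $p$, attacker hashrate $q$, $p+q=1$, $0<q<p$; $n_1\ge2$ is an integer. The attack cycles starting with SS are the words $SSw'H$ with $w'$ a Dyck word over $\{S,H\}$ and $\mathbb{P}[SSw'H]=q^2p(pq)^{|w'|}$ ($|w'|$ half the length of $w'$); equivalently, conditional on starting with SS, $(X_i)$ is a random walk from $0$ with up-step probability $q$ and down-step probability $p$, stopped at its first visit to $-1$ (time $\nu$). (For an honest block at index $i$ of $w$, $X_i+2$ is its relative height, i.e. the height of the attacker's fork at its creation minus its own height, and $X_i+3$ is its distance to a nephew if it becomes an uncle.) *)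

From Stdlib Require Import Reals ZArith List Bool.
Import ListNotations.
Open Scope R_scope.

(* Letters: true = S (attacker block), false = H (honest block). *)
Definition letter := bool.
Definition S : letter := true.
Definition H : letter := false.

Fixpoint all_words (n : nat) : list (list letter) :=
  match n with
  | O => [nil]
  | Datatypes.S m => flat_map (fun w => [S :: w; H :: w]) (all_words m)
  end.

Fixpoint dyck_from (h : nat) (w : list letter) : bool :=
  match w with
  | nil => Nat.eqb h 0
  | b :: w' =>
      if b then dyck_from (Datatypes.S h) w'
      else match h with O => false | Datatypes.S h' => dyck_from h' w' end
  end.
Definition is_dyck (w : list letter) : bool := dyck_from 0 w.

Definition step (x : Z) (b : letter) : Z := if b then (x + 1)%Z else (x - 1)%Z.

Fixpoint D_from (n1 : nat) (x : Z) (w : list letter) : Z :=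
  match w with
  | nil => 0%Z
  | b :: w' =>
      let y := step x b in
      ((if (y <? Z.of_nat n1 - 2)%Z && (y <? x)%Z then (y + 3)%Z else 0%Z)
       + D_from n1 y w')%Z
  end.

(* D(omega) for omega = S S w, with X_0 = 0. *)
Definition D (n1 : nat) (w : list letter) : Z := D_from n1 0%Z w.

(* Conditional probability P[omega = S S w' H | omega starts with SS]
   = P[SSw'H] / q^2 = p (pq)^{|w'|}, |w'| the semilength of the Dyck word w'. *)
Definition cond_prob (p q : R) (k : nat) : R := p * (p * q) ^ k.

(* Contribution to E[D | SS] of the attack cycles SSw'H with w' a Dyck word
   of semilength k. *)
Definition E_term (n1 : nat) (p q : R) (k : nat) : R :=
  fold_right Rplus 0
    (map (fun w' => if is_dyck w'
                    then cond_prob p q k * IZR (D n1 (w' ++ [H]))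
                    else 0)
         (all_words (2 * k))).

From Stdlib Require Import Reals Lra Lia ZArith List Bool.
Import ListNotations.
Open Scope R_scope.

(* Conditionally on SS, the heights X_i form a walk from 0 with up-steps of
   probability q and down-steps of probability p, absorbed at -1, and D adds
   X_i + 3 at every down-step landing below n1 - 2 (the absorbing step adds 2).
   Let Psi be a bounded solution of the first-step equations
   Psi(0) = q Psi(1) + 2p and Psi(h+1) = q Psi(h+2) + p (c_h + Psi(h)), c_h being
   that reward. The difference between Psi(h) and the contribution of the cycles
   absorbed within N steps obeys the same recursion, forced by c_h times the
   probability of surviving N steps. Since the walk drifts downwards,
   (2q)^(-h-1) is a Lyapunov function, so the survival probability and then
   this remainder decay geometrically in N, and the series sums to Psi(0).
   An explicit solution is quadratic plus geometric in h up to h = n1 - 2 and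
   constant above; its value at 0 is the stated formula. *)

Definition sumR {A : Type} (F : A -> R) (l : list A) : R :=
  fold_right Rplus 0 (map F l).

Section ListSums.
Context {A : Type}.

Lemma sumR_cons (F : A -> R) x l : sumR F (x :: l) = F x + sumR F l.
Proof. reflexivity. Qed.

Lemma sumR_app (F : A -> R) l1 l2 : sumR F (l1 ++ l2) = sumR F l1 + sumR F l2.
Proof.
  unfold sumR; rewrite map_app, fold_right_app.
  induction l1 as [|x l1 IH]; simpl; [ring | rewrite IH; ring].
Qed.

Lemma sumR_map {B : Type} (F : A -> R) (g : B -> A) l :
  sumR F (map g l) = sumR (fun x => F (g x)) l.
Proof. unfold sumR; rewrite map_map; reflexivity. Qed.

Lemma sumR_ext_in (F G : A -> R) l :
  (forall x, In x l -> F x = G x) -> sumR F l = sumR G l.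
Proof.
  unfold sumR; intros E; f_equal; apply map_ext_in; exact E.
Qed.

Lemma sumR_ext (F G : A -> R) l : (forall x, F x = G x) -> sumR F l = sumR G l.
Proof. intros E; apply sumR_ext_in; auto. Qed.

Lemma sumR_plus (F G : A -> R) l : sumR (fun x => F x + G x) l = sumR F l + sumR G l.
Proof. induction l as [|x l IH]; unfold sumR in *; simpl; [ring | rewrite IH; ring]. Qed.

Lemma sumR_scal_l (a : R) (F : A -> R) l : sumR (fun x => a * F x) l = a * sumR F l.
Proof. induction l as [|x l IH]; unfold sumR in *; simpl; [ring | rewrite IH; ring]. Qed.

Lemma sumR_zero (F : A -> R) l : (forall x, In x l -> F x = 0) -> sumR F l = 0.
Proof.
  induction l as [|x l IH]; intros E; [reflexivity|].
  rewrite sumR_cons, E, IH; [ring | intros y Hy; apply E | ]; simpl; auto.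
Qed.

End ListSums.

Lemma sumR_seq_S_l (F : nat -> R) N :
  sumR F (seq 0 (Datatypes.S N)) = F 0%nat + sumR (fun m => F (Datatypes.S m)) (seq 0 N).
Proof. simpl seq; rewrite <- seq_shift, sumR_cons, sumR_map; reflexivity. Qed.

Lemma sum_f_R0_even_terms (T : nat -> R) n :
  (forall k, T (2 * k + 1)%nat = 0) ->
  sum_f_R0 (fun k => T (2 * k)%nat) n = sumR T (seq 0 (2 * n + 2)).
Proof.
  intros Todd; induction n as [|n IH].
  - unfold sumR; simpl; rewrite (Todd 0%nat : T 1%nat = 0); ring.
  - replace (2 * Datatypes.S n + 2)%nat with (Datatypes.S (Datatypes.S (2 * n + 2))) by lia.
    rewrite !seq_S, !sumR_app, <- IH.
    replace (0 + Datatypes.S (2 * n + 2))%nat with (2 * Datatypes.S n + 1)%nat by lia.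
    replace (0 + (2 * n + 2))%nat with (2 * Datatypes.S n)%nat by lia.
    rewrite !sumR_cons, Todd; unfold sumR; simpl; ring.
Qed.

Lemma infinite_sum_of_geometric_error (f : nat -> R) (l C mu : R) :
  0 <= mu < 1 -> (forall n, Rabs (sum_f_R0 f n - l) <= C * mu ^ n) -> infinite_sum f l.
Proof.
  intros [mu0 mu1] Herr eps Heps.
  assert (HC : 0 < Rabs C + 1) by (pose proof (Rabs_pos C); lra).
  destruct (pow_lt_1_zero mu ltac:(rewrite Rabs_pos_eq; lra) (eps / (Rabs C + 1)))
    as [N HN]; [apply Rdiv_lt_0_compat; lra|].
  exists N; intros n Hn; unfold Rdist.
  specialize (HN n Hn); rewrite Rabs_pos_eq in HN by (apply pow_le; lra).
  apply Rmult_lt_compat_l with (r := Rabs C + 1) in HN; [|lra].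
  replace ((Rabs C + 1) * (eps / (Rabs C + 1))) with eps in HN by (field; lra).
  assert (C * mu ^ n <= Rabs C * mu ^ n).
  { apply Rmult_le_compat_r; [apply pow_le; lra | apply RRle_abs]. }
  pose proof (Herr n); pose proof (pow_le mu n mu0); nra.
Qed.

Lemma bounded_on_initial_segment (f : nat -> R) K :
  exists B, forall h, (h <= K)%nat -> Rabs (f h) <= B.
Proof.
  induction K as [|K [B HB]].
  - exists (Rabs (f 0%nat)); intros h Hh; replace h with 0%nat by lia; lra.
  - exists (Rmax B (Rabs (f (Datatypes.S K)))); intros h Hh.
    destruct (Nat.eq_dec h (Datatypes.S K)) as [->|ne]; [apply Rmax_r|].
    eapply Rle_trans; [apply HB; lia | apply Rmax_l].
Qed.

Lemma sumR_all_words_S (F : list letter -> R) m :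
  sumR F (all_words (Datatypes.S m)) = sumR (fun w => F (S :: w) + F (H :: w)) (all_words m).
Proof.
  change (all_words (Datatypes.S m)) with (flat_map (fun w => [S :: w; H :: w]) (all_words m)).
  induction (all_words m) as [|w l IH]; [reflexivity|].
  simpl flat_map; rewrite !sumR_cons, IH; ring.
Qed.

Lemma all_words_length m w : In w (all_words m) -> length w = m.
Proof.
  revert w; induction m as [|m IH]; intros w Hw.
  - destruct Hw as [<-|[]]; reflexivity.
  - apply in_flat_map in Hw as [v [Hv [<-|[<-|[]]]]]; simpl; rewrite IH; auto.
Qed.

Fixpoint weight (p q : R) (w : list letter) : R :=
  match w with
  | nil => 1
  | b :: w' => (if b then q else p) * weight p q w'
  end.

Lemma dyck_from_weight p q w h : dyck_from h w = true ->
  exists k, (length w + h = 2 * k)%nat /\ q ^ h * weight p q w = (p * q) ^ k.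
Proof.
  revert h; induction w as [|[|] w IH]; intros h Hw; simpl in Hw.
  - apply Nat.eqb_eq in Hw as ->; exists 0%nat; simpl; split; [reflexivity | ring].
  - destruct (IH _ Hw) as [k [Hk Ew]]; exists k; split; [simpl; lia|].
    simpl weight; rewrite <- Ew; simpl; ring.
  - destruct h as [|h]; [discriminate|].
    destruct (IH _ Hw) as [k [Hk Ew]]; exists (Datatypes.S k); split; [simpl; lia|].
    simpl weight; simpl pow; rewrite <- Ew; ring.
Qed.

Definition drop_reward (n1 h : nat) : Z :=
  if (Z.of_nat h <? Z.of_nat n1 - 2)%Z then (Z.of_nat h + 3)%Z else 0%Z.

Lemma drop_reward_bounds n1 h : 0 <= IZR (drop_reward n1 h) <= INR n1 + 1.
Proof.
  unfold drop_reward; rewrite INR_IZR_INZ, <- plus_IZR.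
  destruct (Z.ltb_spec (Z.of_nat h) (Z.of_nat n1 - 2)); split; apply IZR_le; lia.
Qed.

Lemma D_from_S n1 h w :
  D_from n1 (Z.of_nat h) (S :: w) = D_from n1 (Z.of_nat (Datatypes.S h)) w.
Proof.
  cbn [D_from step S]; rewrite Nat2Z.inj_succ, <- Z.add_1_r.
  rewrite (proj2 (Z.ltb_ge (Z.of_nat h + 1) (Z.of_nat h))), andb_false_r by lia.
  reflexivity.
Qed.

Lemma D_from_H n1 h w :
  D_from n1 (Z.of_nat (Datatypes.S h)) (H :: w) = (drop_reward n1 h + D_from n1 (Z.of_nat h) w)%Z.
Proof.
  cbn [D_from step H]; rewrite Nat2Z.inj_succ, Z.sub_1_r, Z.pred_succ.
  rewrite (proj2 (Z.ltb_lt (Z.of_nat h) (Z.succ (Z.of_nat h)))), andb_true_r by lia.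
  reflexivity.
Qed.

Lemma D_from_snoc_H n1 h w : (2 <= n1)%nat -> dyck_from h w = true ->
  D_from n1 (Z.of_nat h) (w ++ [H]) = (D_from n1 (Z.of_nat h) w + 2)%Z.
Proof.
  intros Hn; revert h; induction w as [|[|] w IH]; intros h Hw; simpl in Hw.
  - apply Nat.eqb_eq in Hw as ->; simpl.
    rewrite (proj2 (Z.ltb_lt _ _)) by lia; reflexivity.
  - change ((true :: w) ++ [H]) with (S :: (w ++ [H])).
    rewrite !D_from_S, IH by exact Hw; reflexivity.
  - destruct h as [|h]; [discriminate|].
    change ((false :: w) ++ [H]) with (H :: (w ++ [H])).
    rewrite !D_from_H, IH by exact Hw; lia.
Qed.

Section Excursions.
Variables (p q : R) (n1 : nat).

Definition excursion_mass (m h : nat) : R :=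
  sumR (fun w => if dyck_from h w then weight p q w else 0) (all_words m).

Definition excursion_D (m h : nat) : R :=
  sumR (fun w => if dyck_from h w then weight p q w * IZR (D_from n1 (Z.of_nat h) w) else 0)
    (all_words m).

(* E[D; absorption at step m + 1] for the walk from height h: the absorbing
   step from 0 to -1 has probability p and adds 2 to D. *)
Definition cycle_term (m h : nat) : R := p * (excursion_D m h + 2 * excursion_mass m h).

Lemma excursion_mass_0 h : excursion_mass 0 h = if (h =? 0)%nat then 1 else 0.
Proof. unfold excursion_mass, sumR; destruct h; simpl; ring. Qed.

Lemma excursion_mass_S_0 m : excursion_mass (Datatypes.S m) 0 = q * excursion_mass m 1.
Proof.
  unfold excursion_mass; rewrite sumR_all_words_S, <- sumR_scal_l.
  apply sumR_ext; intro w; simpl; destruct (dyck_from 1 w); ring.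
Qed.

Lemma excursion_mass_S_S m h :
  excursion_mass (Datatypes.S m) (Datatypes.S h) =
  q * excursion_mass m (Datatypes.S (Datatypes.S h)) + p * excursion_mass m h.
Proof.
  unfold excursion_mass; rewrite sumR_all_words_S, <- !sumR_scal_l, <- sumR_plus.
  apply sumR_ext; intro w; simpl.
  destruct (dyck_from (Datatypes.S (Datatypes.S h)) w), (dyck_from h w); ring.
Qed.

Lemma excursion_D_0 h : excursion_D 0 h = 0.
Proof. unfold excursion_D, sumR; simpl; destruct (h =? 0)%nat; ring. Qed.

Lemma excursion_D_S_0 m : excursion_D (Datatypes.S m) 0 = q * excursion_D m 1.
Proof.
  unfold excursion_D; rewrite sumR_all_words_S, <- sumR_scal_l.
  apply sumR_ext; intro w; rewrite D_from_S; simpl; destruct (dyck_from 1 w); ring.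
Qed.

Lemma excursion_D_S_S m h :
  excursion_D (Datatypes.S m) (Datatypes.S h) =
  q * excursion_D m (Datatypes.S (Datatypes.S h)) +
  p * (excursion_D m h + IZR (drop_reward n1 h) * excursion_mass m h).
Proof.
  unfold excursion_D, excursion_mass.
  rewrite sumR_all_words_S, <- !sumR_scal_l, <- sumR_plus, <- sumR_scal_l, <- sumR_plus.
  apply sumR_ext; intro w; rewrite D_from_S, D_from_H, plus_IZR; simpl.
  destruct (dyck_from (Datatypes.S (Datatypes.S h)) w), (dyck_from h w); ring.
Qed.

Lemma cycle_term_0 h : cycle_term 0 h = if (h =? 0)%nat then 2 * p else 0.
Proof. unfold cycle_term; rewrite excursion_D_0, excursion_mass_0; destruct h; simpl; ring. Qed.

Lemma cycle_term_S_0 m : cycle_term (Datatypes.S m) 0 = q * cycle_term m 1.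
Proof. unfold cycle_term; rewrite excursion_D_S_0, excursion_mass_S_0; ring. Qed.

Lemma cycle_term_S_S m h :
  cycle_term (Datatypes.S m) (Datatypes.S h) =
  q * cycle_term m (Datatypes.S (Datatypes.S h)) +
  p * (cycle_term m h + IZR (drop_reward n1 h) * (p * excursion_mass m h)).
Proof. unfold cycle_term; rewrite excursion_D_S_S, excursion_mass_S_S; ring. Qed.

Lemma E_term_cycle_term k : (2 <= n1)%nat -> E_term n1 p q k = cycle_term (2 * k) 0.
Proof.
  intros Hn; unfold E_term, cycle_term, excursion_D, excursion_mass.
  change (fold_right Rplus 0 (map ?F ?l)) with (sumR F l).
  rewrite <- sumR_scal_l, <- sumR_plus, <- sumR_scal_l.
  apply sumR_ext_in; intros w Hw; apply all_words_length in Hw.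
  unfold is_dyck; destruct (dyck_from 0 w) eqn:Hd; [|ring].
  destruct (dyck_from_weight p q w 0 Hd) as [k' [Hk' Ew]].
  replace k' with k in Ew by lia; simpl in Ew.
  pose proof (D_from_snoc_H n1 0 w Hn Hd) as Esnoc; simpl Z.of_nat in *.
  unfold D, cond_prob; rewrite Esnoc, plus_IZR, <- Ew; ring.
Qed.

Lemma cycle_term_odd k : cycle_term (2 * k + 1) 0 = 0.
Proof.
  assert (Hodd : forall w, In w (all_words (2 * k + 1)) -> dyck_from 0 w = false).
  { intros w Hw; apply all_words_length in Hw.
    destruct (dyck_from 0 w) eqn:Hd; [|reflexivity].
    destruct (dyck_from_weight p q w 0 Hd) as [k' [Hk' _]]; lia. }
  unfold cycle_term, excursion_D, excursion_mass.
  rewrite !sumR_zero by (intros w Hw; rewrite Hodd by exact Hw; reflexivity); ring.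
Qed.

End Excursions.

Fixpoint survival (p q : R) (N h : nat) : R :=
  match N with
  | O => 1
  | Datatypes.S N' =>
      q * survival p q N' (Datatypes.S h) +
      match h with O => 0 | Datatypes.S h' => p * survival p q N' h' end
  end.

Lemma survival_complement p q N h : p + q = 1 ->
  survival p q N h = 1 - p * sumR (fun m => excursion_mass p q m h) (seq 0 N).
Proof.
  intros Hpq; revert h; induction N as [|N IH]; intros h; [unfold sumR; simpl; ring|].
  rewrite sumR_seq_S_l, excursion_mass_0; destruct h as [|h]; simpl survival.
  - rewrite (sumR_ext _ (fun m => q * excursion_mass p q m 1)) by apply excursion_mass_S_0.
    rewrite sumR_scal_l, IH; simpl; replace q with (1 - p) by lra; ring.
  - rewrite (sumR_ext _ (fun m => q * excursion_mass p q m (Datatypes.S (Datatypes.S h))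
                                  + p * excursion_mass p q m h))
      by (intro m; apply excursion_mass_S_S).
    rewrite sumR_plus, !sumR_scal_l, !IH; simpl; replace q with (1 - p) by lra; ring.
Qed.

Section Remainder.
Variables (p q : R) (n1 : nat) (Psi : nat -> R).
Hypothesis Hpq : p + q = 1.
Hypothesis Psi_0 : Psi 0%nat = q * Psi 1%nat + 2 * p.
Hypothesis Psi_S : forall h, Psi (Datatypes.S h) =
  q * Psi (Datatypes.S (Datatypes.S h)) + p * (IZR (drop_reward n1 h) + Psi h).

Definition remainder (N h : nat) : R :=
  Psi h - sumR (fun m => cycle_term p q n1 m h) (seq 0 N).

Lemma remainder_S_0 N : remainder (Datatypes.S N) 0 = q * remainder N 1.
Proof.
  unfold remainder; rewrite sumR_seq_S_l, cycle_term_0, Psi_0.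
  rewrite (sumR_ext _ (fun m => q * cycle_term p q n1 m 1)) by apply cycle_term_S_0.
  rewrite sumR_scal_l; simpl; ring.
Qed.

Lemma remainder_S_S N h :
  remainder (Datatypes.S N) (Datatypes.S h) =
  q * remainder N (Datatypes.S (Datatypes.S h)) +
  p * (remainder N h + IZR (drop_reward n1 h) * survival p q N h).
Proof.
  unfold remainder; rewrite sumR_seq_S_l, cycle_term_0, Psi_S.
  rewrite (sumR_ext _ (fun m => q * cycle_term p q n1 m (Datatypes.S (Datatypes.S h)) +
     p * (cycle_term p q n1 m h + (IZR (drop_reward n1 h) * p) * excursion_mass p q m h)))
    by (intro m; rewrite cycle_term_S_S; ring).
  rewrite !sumR_plus, !sumR_scal_l, sumR_plus, sumR_scal_l.
  rewrite (survival_complement p q N h Hpq); simpl; ring.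
Qed.

End Remainder.

Section Geometric_decay.
Variables (p q lam rho : R).
Hypotheses (Hp : 0 < p) (Hq : 0 < q) (Hlam : 1 <= lam) (Hrho : 0 <= rho).
Hypothesis drift : q * lam ^ 2 + p <= lam * rho.
Hypothesis drift_0 : q * lam <= rho.

Lemma survival_bound N h : 0 <= survival p q N h <= lam ^ Datatypes.S h * rho ^ N.
Proof.
  revert h; induction N as [|N IH]; intros h.
  - simpl; pose proof (pow_R1_Rle lam h Hlam); nra.
  - assert (0 <= lam ^ h) by (apply pow_le; lra).
    assert (0 <= rho ^ N) by (apply pow_le; lra).
    destruct h as [|h]; simpl survival.
    + destruct (IH 1%nat) as [s0 s1]; simpl in s1 |- *; split; [nra|].
      assert (q * lam * (lam * rho ^ N) <= rho * (lam * rho ^ N)) by (apply Rmult_le_compat_r; nra).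
      nra.
    + destruct (IH (Datatypes.S (Datatypes.S h))) as [s0 s1], (IH h) as [s2 s3].
      simpl in s1, s3 |- *; split; [nra|].
      assert ((q * lam ^ 2 + p) * (lam * lam ^ h * rho ^ N) <= lam * rho * (lam * lam ^ h * rho ^ N))
        by (apply Rmult_le_compat_r; nra).
      nra.
Qed.

Variables (mu b C : R) (c : nat -> R) (r : nat -> nat -> R).
Hypotheses (Hmu : rho < mu) (Hc : forall h, 0 <= c h <= b) (HC : p * b <= C * (mu - rho)).
Hypothesis r_0 : forall h, Rabs (r 0%nat h) <= C.
Hypothesis r_S_0 : forall N, r (Datatypes.S N) 0%nat = q * r N 1%nat.
Hypothesis r_S_S : forall N h, r (Datatypes.S N) (Datatypes.S h) =
  q * r N (Datatypes.S (Datatypes.S h)) + p * (r N h + c h * survival p q N h).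

Lemma forced_recursion_bound N h : Rabs (r N h) <= C * lam ^ Datatypes.S h * mu ^ N.
Proof.
  assert (C0 : 0 <= C) by (pose proof (r_0 0%nat); pose proof (Rabs_pos (r 0%nat 0%nat)); lra).
  revert h; induction N as [|N IH]; intros h.
  - rewrite pow_O, Rmult_1_r; apply Rle_trans with C; [apply r_0|].
    pose proof (pow_R1_Rle lam (Datatypes.S h) Hlam); nra.
  - assert (0 <= mu ^ N) by (apply pow_le; lra).
    assert (rho ^ N <= mu ^ N) by (apply pow_incr; lra).
    destruct h as [|h].
    + rewrite r_S_0, Rabs_mult, (Rabs_pos_eq q) by lra.
      specialize (IH 1%nat); simpl in IH |- *.
      assert (q * lam * (C * lam * mu ^ N) <= mu * (C * lam * mu ^ N)).
      { apply Rmult_le_compat_r; [repeat apply Rmult_le_pos|]; lra. }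
      nra.
    + rewrite r_S_S.
      set (L := lam ^ Datatypes.S h); set (K := C * L * mu ^ N).
      assert (L0 : 0 <= L) by (apply pow_le; lra).
      assert (K0 : 0 <= K) by (unfold K; apply Rmult_le_pos; [apply Rmult_le_pos|]; lra).
      assert (E1 : Rabs (r N (Datatypes.S (Datatypes.S h))) <= lam ^ 2 * K).
      { eapply Rle_trans; [apply IH|]; unfold K, L; simpl; lra. }
      assert (E2 : Rabs (r N h) <= K) by apply IH.
      destruct (survival_bound N h) as [s0 s1], (Hc h) as [c0 c1].
      assert (E3 : c h * survival p q N h <= b * (L * mu ^ N)).
      { apply Rmult_le_compat; try lra.
        apply Rle_trans with (1 := s1), Rmult_le_compat_l; lra. }
      assert (E4 : p * (b * (L * mu ^ N)) <= (mu - rho) * K).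
      { unfold K; replace (C * L * mu ^ N) with (C * (L * mu ^ N)) by ring.
        assert (0 <= L * mu ^ N) by (apply Rmult_le_pos; lra). nra. }
      assert (Etri : Rabs (q * r N (Datatypes.S (Datatypes.S h)) + p * (r N h + c h * survival p q N h))
                     <= q * Rabs (r N (Datatypes.S (Datatypes.S h))) + p * (Rabs (r N h) + c h * survival p q N h)).
      { eapply Rle_trans; [apply Rabs_triang|].
        rewrite !Rabs_mult, (Rabs_pos_eq q), (Rabs_pos_eq p) by lra.
        apply Rplus_le_compat_l, Rmult_le_compat_l; [lra|].
        eapply Rle_trans; [apply Rabs_triang|].
        rewrite (Rabs_pos_eq (c h * _)) by nra; lra. }
      replace (C * lam ^ Datatypes.S (Datatypes.S h) * mu ^ Datatypes.S N) with (lam * mu * K)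
        by (unfold K, L; simpl; ring).
      assert ((q * lam ^ 2 + p) * K <= lam * rho * K) by (apply Rmult_le_compat_r; lra).
      assert ((mu - rho) * K <= lam * (mu - rho) * K) by (apply Rmult_le_compat_r; nra).
      nra.
Qed.

End Geometric_decay.

Lemma downward_drift p q : 0 < q < p -> p + q = 1 ->
  exists lam rho, 1 <= lam /\ 0 <= rho < 1 /\ q * lam ^ 2 + p <= lam * rho /\ q * lam <= rho.
Proof.
  intros [Hq Hqp] Hpq; exists (/ (2 * q)), (1 / 2 + 2 * p * q).
  assert (E : q * / (2 * q) = 1 / 2) by (field; lra).
  repeat split.
  - apply (Rmult_le_reg_l (2 * q)); [lra|]; rewrite Rinv_r by lra; lra.
  - nra.
  - nra.
  - right; field; lra.
  - rewrite E; nra.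
Qed.

Lemma E_term_series (p q : R) (n1 : nat) (Psi : nat -> R) (B : R) :
  0 < q < p -> p + q = 1 -> (2 <= n1)%nat ->
  (forall h, Rabs (Psi h) <= B) ->
  Psi 0%nat = q * Psi 1%nat + 2 * p ->
  (forall h, Psi (Datatypes.S h) =
     q * Psi (Datatypes.S (Datatypes.S h)) + p * (IZR (drop_reward n1 h) + Psi h)) ->
  infinite_sum (E_term n1 p q) (Psi 0%nat).
Proof.
  intros [Hq Hqp] Hpq Hn HB Psi_0 Psi_S.
  destruct (downward_drift p q (conj Hq Hqp) Hpq) as (lam & rho & Hlam & [Hrho0 Hrho1] & drift & drift_0).
  set (mu := (1 + rho) / 2); set (b := INR n1 + 1).
  set (C := B + p * b / (mu - rho)).
  assert (HB0 : 0 <= B) by (pose proof (HB 0%nat); pose proof (Rabs_pos (Psi 0%nat)); lra).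
  assert (Hmu : rho < mu < 1) by (unfold mu; lra).
  assert (HC : p * b <= C * (mu - rho)).
  { unfold C; rewrite Rmult_plus_distr_r.
    replace (p * b / (mu - rho) * (mu - rho)) with (p * b) by (field; lra); nra. }
  assert (Hr0 : forall h, Rabs (remainder p q n1 Psi 0 h) <= C).
  { intro h; unfold remainder, sumR; simpl; rewrite Rminus_0_r.
    assert (0 <= p * b / (mu - rho)).
    { apply Rmult_le_pos; [pose proof (pos_INR n1); unfold b; nra|].
      apply Rlt_le, Rinv_0_lt_compat; lra. }
    pose proof (HB h); unfold C; lra. }
  pose proof (forced_recursion_bound p q lam rho ltac:(lra) Hq Hlam Hrho0 drift drift_0
    mu b C (fun h => IZR (drop_reward n1 h)) (remainder p q n1 Psi)
    ltac:(lra) (fun h => drop_reward_bounds n1 h) HC Hr0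
    (remainder_S_0 p q n1 Psi Psi_0) (remainder_S_S p q n1 Psi Hpq Psi_S)) as Hdecay.
  apply infinite_sum_of_geometric_error with (C := C * lam * mu ^ 2) (mu := mu ^ 2).
  { apply pow_lt_1_compat; [lra | lia]. }
  intros n.
  rewrite (sum_eq _ (fun k => cycle_term p q n1 (2 * k) 0)) by (intros; apply E_term_cycle_term, Hn).
  rewrite (sum_f_R0_even_terms (fun m => cycle_term p q n1 m 0)) by apply cycle_term_odd.
  replace (sumR _ _ - Psi 0%nat) with (- remainder p q n1 Psi (2 * n + 2) 0) by (unfold remainder; ring).
  rewrite Rabs_Ropp, <- pow_mult.
  replace (C * lam * mu ^ 2 * mu ^ (2 * n)) with (C * lam ^ 1 * mu ^ (2 * n + 2))
    by (rewrite pow_add; ring).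
  apply Hdecay.
Qed.

Section Potential.
Variables (p q : R) (K : nat).
Hypotheses (Hq : 0 < q) (Hqp : q < p) (Hpq : p + q = 1).

Definition quad_coef : R := p / (2 * (p - q)).
Definition lin_coef : R := (2 * p + quad_coef) / (p - q).
Definition geom_coef : R := - (quad_coef * (2 * INR K + 1) + lin_coef) / (1 - q / p).
Definition const_coef : R := lin_coef - quad_coef - geom_coef * (q / p) ^ (K + 2).

(* At height h the profile is used with e = K + 1 - h and x = h: (q/p)^e is then
   (p/q)^h up to a constant, solving the homogeneous step equation, and the
   polynomial part is a particular solution. *)
Definition profile (e : nat) (x : R) : R :=
  const_coef + geom_coef * (q / p) ^ e + quad_coef * x ^ 2 + lin_coef * x.

(* Down-steps landing at K = n1 - 2 or above are not rewarded, so the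
   potential is constant from height K on. *)
Definition potential (h : nat) : R :=
  profile (K + 1 - Nat.min h K) (INR (Nat.min h K)).

Lemma potential_clamp h : potential h = potential (Nat.min h K).
Proof. unfold potential; rewrite (Nat.min_l (Nat.min h K) K) by apply Nat.le_min_r; reflexivity. Qed.

Lemma profile_step e x :
  q * profile e (x + 1) + p * profile (Datatypes.S (Datatypes.S e)) (x - 1) =
  profile (Datatypes.S e) x - p * (x + 2).
Proof.
  unfold profile, lin_coef, quad_coef; simpl pow.
  replace q with (1 - p) by lra; field; lra.
Qed.

Lemma profile_absorbed : profile (K + 2) (-1) = 0.
Proof. unfold profile, const_coef; ring. Qed.

Lemma profile_flat : profile 0 (INR K + 1) = profile 1 (INR K).
Proof.
  unfold profile, geom_coef, lin_coef, quad_coef; simpl pow.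
  replace q with (1 - p) by lra; field; lra.
Qed.

Lemma potential_profile h : (h <= K + 1)%nat -> potential h = profile (K + 1 - h) (INR h).
Proof.
  intros Hh; unfold potential.
  destruct (Nat.le_gt_cases h K) as [le|gt]; [rewrite Nat.min_l by lia; reflexivity|].
  rewrite Nat.min_r by lia; replace h with (K + 1)%nat by lia.
  rewrite Nat.sub_diag, plus_INR, INR_1, profile_flat.
  replace (K + 1 - K)%nat with 1%nat by lia; reflexivity.
Qed.

Lemma potential_eq_0 : potential 0 = q * potential 1 + 2 * p.
Proof.
  rewrite !potential_profile by lia.
  pose proof (profile_step K 0) as E.
  replace (Datatypes.S (Datatypes.S K)) with (K + 2)%nat in E by lia.
  replace (0 - 1) with (-1) in E by ring.
  rewrite Rplus_0_l, profile_absorbed in E.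
  replace (K + 1 - 0)%nat with (Datatypes.S K) by lia.
  replace (K + 1 - 1)%nat with K by lia.
  simpl INR; lra.
Qed.

Lemma potential_eq_S h : potential (Datatypes.S h) =
  q * potential (Datatypes.S (Datatypes.S h)) + p * (IZR (drop_reward (K + 2) h) + potential h).
Proof.
  unfold drop_reward; rewrite Nat2Z.inj_add.
  destruct (Nat.lt_ge_cases h K) as [lt|ge].
  - rewrite (proj2 (Z.ltb_lt _ _)) by lia.
    rewrite !potential_profile by lia.
    set (e := (K - Datatypes.S h)%nat).
    replace (K + 1 - Datatypes.S (Datatypes.S h))%nat with e by lia.
    replace (K + 1 - Datatypes.S h)%nat with (Datatypes.S e) by lia.
    replace (K + 1 - h)%nat with (Datatypes.S (Datatypes.S e)) by lia.
    pose proof (profile_step e (INR (Datatypes.S h))) as E.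
    replace (INR (Datatypes.S h) - 1) with (INR h) in E by (rewrite S_INR; ring).
    rewrite plus_IZR, <- INR_IZR_INZ, !S_INR in *; lra.
  - rewrite (proj2 (Z.ltb_ge _ _)) by lia.
    unfold potential; rewrite !Nat.min_r by lia.
    replace q with (1 - p) by lra; simpl IZR; ring.
Qed.

Lemma potential_value : potential 0 =
  p / (p - q) ^ 2 * (2 * p - q - (p + INR (K + 2) * (p - q)) * (q / p) ^ (K + 2 - 1)).
Proof.
  rewrite potential_profile by lia.
  unfold profile, const_coef, geom_coef, lin_coef, quad_coef.
  replace (K + 2 - 1)%nat with (K + 1)%nat by lia.
  replace (K + 2)%nat with (Datatypes.S (K + 1)) by lia.
  rewrite Nat.sub_0_r, S_INR, plus_INR; simpl pow.
  generalize ((q / p) ^ (K + 1)) (INR K); intros X k; simpl INR.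
  replace q with (1 - p) by lra; field; lra.
Qed.

End Potential.

Theorem proposition10 (p q : R) (n1 : nat) :
  0 < q -> q < p -> p + q = 1 -> (2 <= n1)%nat ->
  infinite_sum (E_term n1 p q)
    (p / (p - q) ^ 2 *
     (2 * p - q - (p + INR n1 * (p - q)) * (q / p) ^ (n1 - 1))).
Proof.
  intros Hq Hqp Hpq Hn.
  destruct (Nat.le_exists_sub 2 n1 Hn) as [K [-> _]].
  rewrite <- (potential_value p q K) by lra.
  destruct (bounded_on_initial_segment (potential p q K) K) as [B HB].
  apply E_term_series with (B := B).
  - lra.
  - exact Hpq.
  - lia.
  - intro h; rewrite potential_clamp; apply HB, Nat.le_min_r.
  - apply potential_eq_0; lra.
  - apply potential_eq_S; lra.
Qed.
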